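(* Let $\mathcal K=(\mathcal T,\mathcal B)$ be a $\mathcal{BALC}$ knowledge base, $C,D$ $\mathcal{ALC}$ concepts and $\kappa$ a context. Then $\mathcal K\models(C\sqsubseteq D)^\kappa$ if and only if $P_{\mathcal K}((C\sqsubseteq D)^\kappa)=1$.
   Context: $V$ is a finite set of random variables, each with a finite value set; a world $\omega$ assigns a value to each variable. A Bayesian network $\mathcal B$ over $V$ defines $P_{\mathcal{B}}(\omega)=\prod_{X\in V}P(X=\omega(X)\mid \pi(X)=\omega(\pi(X)))$. A context is a set of pairs $(X,x)$, $x$ a value of $X$; $\omega\models\kappa$ iff $\omega(X)=x$ for all $(X,x)\in\kappa$. $\mathcal T$ is a finite set of contextual GCIs $(C\sqsubseteq D)^\kappa$. A $V$-interpretation $\mathcal{V}=(\Delta^{\mathcal V},\cdot^{\mathcal V},v^{\mathcal V})$ is an $\mathcal{ALC}$ interpretation plus a world; $\mathcal V\models\alpha^\kappa$ iff $v^{\mathcal V}\not\models\kappa$ or the $\mathcal{ALC}$ interpretation satisfies $\alpha$. A probabilistic interpretation $\mathcal P=(\mathcal J,P_{\mathcal J})$ is a finite set of $V$-interpretations with a distribution assigning each positive probability; $\mathcal P\models\alpha^\kappa$ iff every $\mathcal V\in\mathcal J$ does; $\mathcal P$ is a model of $\mathcal K$ iff every member satisfies all axioms of $\mathcal T$ and $\sum_{\mathcal V\in\mathcal J,\,v^{\mathcal V}=\omega}P_{\mathcal J}(\mathcal V)=P_{\mathcal B}(\omega)$ for every world $\omega$; $\mathcal K$ is consistent iff it has a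 model. $\mathcal K\models(C\sqsubseteq D)^\kappa$ iff every model of $\mathcal K$ is a model of $(C\sqsubseteq D)^\kappa$. For a model $\mathcal P$, $P_{\mathcal P}((C\sqsubseteq D)^\kappa)=\sum_{\mathcal V\in\mathcal J,\ \mathcal V\models(C\sqsubseteq D)^\kappa}P_{\mathcal J}(\mathcal V)$, and $P_{\mathcal K}((C\sqsubseteq D)^\kappa)=\inf_{\mathcal P\models\mathcal K}P_{\mathcal P}((C\sqsubseteq D)^\kappa)$; if $\mathcal K$ is inconsistent this probability is defined to be $1$. *)

From Stdlib Require List.
From HB Require Import structures.
From mathcomp Require Import all_boot all_order all_algebra.
From mathcomp Require Import boolp classical_sets reals.
Unset Printing Implicit Defensive.
Import Order.TTheory GRing.Theory Num.Theory.
Local Open Scope ring_scope.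
Local Open Scope classical_set_scope.

Inductive concept (NC NR : Type) : Type :=
| CTop | CBot
| CAtom of NC
| CNeg of concept NC NR
| CAnd of concept NC NR & concept NC NR
| COr of concept NC NR & concept NC NR
| CEx of NR & concept NC NR
| CAll of NR & concept NC NR.
Arguments CTop {NC NR}. Arguments CBot {NC NR}.

Record alc_interp (NC NR : Type) := ALCInterp {
  dom : Type;
  dom_inhabited : inhabited dom;
  cint : NC -> dom -> Prop;
  rint : NR -> dom -> dom -> Prop }.

Fixpoint csem {NC NR} (I : alc_interp NC NR) (C : concept NC NR) : dom NC NR I -> Prop :=
  match C with
  | CTop => fun _ => True
  | CBot => fun _ => False
  | CAtom A => cint NC NR I A
  | CNeg C1 => fun d => ~ csem I C1 d
  | CAnd C1 C2 => fun d => csem I C1 d /\ csem I C2 d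
  | COr C1 C2 => fun d => csem I C1 d \/ csem I C2 d
  | CEx r C1 => fun d => exists e, rint NC NR I r d e /\ csem I C1 e
  | CAll r C1 => fun d => forall e, rint NC NR I r d e -> csem I C1 e
  end.
Arguments dom {NC NR}.
Arguments cint {NC NR}.
Arguments rint {NC NR}.

Definition gci_sat {NC NR} (I : alc_interp NC NR) (C D : concept NC NR) : Prop :=
  forall d, csem I C d -> csem I D d.

Definition world (V : finType) (Val : V -> finType) := {dffun forall X : V, Val X}.

Definition context (V : finType) (Val : V -> finType) := set {X : V & Val X}.

Definition wsat {V : finType} {Val : V -> finType} (w : world V Val) (k : context V Val) : Prop :=
  forall p, k p -> w (tag p) = tagged p.

Record caxiom (V : finType) (Val : V -> finType) (NC NR : Type) := CAxiom {
  ax_lhs : concept NC NR; ax_rhs : concept NC NR; ax_ctx : context V Val }.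
Arguments CAxiom {V Val NC NR}.
Arguments ax_lhs {V Val NC NR}. Arguments ax_rhs {V Val NC NR}.
Arguments ax_ctx {V Val NC NR}.

Record bnet (R : realType) (V : finType) (Val : V -> finType) := BNet {
  parents : V -> {set V};
  rank : V -> nat;
  bn_acyclic : forall X Y, Y \in parents X -> (rank Y < rank X)%N;
  (* cpt X w x = P(X = x | pi(X) = w(pi(X))) *)
  cpt : forall X : V, world V Val -> Val X -> R;
  cpt_local : forall X (w w' : world V Val),
      (forall Y, Y \in parents X -> w Y = w' Y) -> forall x, cpt X w x = cpt X w' x;
  cpt_ge0 : forall X w x, 0 <= cpt X w x;
  cpt_sum1 : forall X w, \sum_(x : Val X) cpt X w x = 1 }.
Arguments parents {R V Val}. Arguments rank {R V Val}. Arguments cpt {R V Val}.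

Definition PB {R : realType} {V : finType} {Val : V -> finType}
  (B : bnet R V Val) (w : world V Val) : R :=
  \prod_(X : V) cpt B X w (w X).

Record kb (R : realType) (V : finType) (Val : V -> finType) (NC NR : Type) := KB {
  tbox : seq (caxiom V Val NC NR);
  bn : bnet R V Val }.
Arguments tbox {R V Val NC NR}. Arguments bn {R V Val NC NR}.

Record vinterp (V : finType) (Val : V -> finType) (NC NR : Type) := VInterp {
  vI : alc_interp NC NR;
  vw : world V Val }.
Arguments vI {V Val NC NR}. Arguments vw {V Val NC NR}.

Section Sem.
Context {R : realType} {V : finType} {Val : V -> finType} {NC NR : Type}.

Definition vsat (J : vinterp V Val NC NR) (a : caxiom V Val NC NR) : Prop :=
  ~ wsat (vw J) (ax_ctx a) \/ gci_sat (vI J) (ax_lhs a) (ax_rhs a).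

Record pinterp := PInterp {
  pidx : finType;
  pJ : pidx -> vinterp V Val NC NR;
  pP : pidx -> R;
  pP_pos : forall i, 0 < pP i;
  pP_sum1 : \sum_i pP i = 1 }.

Definition psat (P : pinterp) (a : caxiom V Val NC NR) : Prop :=
  forall i, vsat (pJ P i) a.

Definition is_model (P : pinterp) (K : kb R V Val NC NR) : Prop :=
  (forall i a, List.In a (tbox K) -> vsat (pJ P i) a) /\
  (forall w : world V Val, \sum_(i | vw (pJ P i) == w) pP P i = PB (bn K) w).

Definition consistent (K : kb R V Val NC NR) : Prop :=
  exists P : pinterp, is_model P K.

Definition entails (K : kb R V Val NC NR) (a : caxiom V Val NC NR) : Prop :=
  forall P : pinterp, is_model P K -> psat P a.

Definition prob_in (P : pinterp) (a : caxiom V Val NC NR) : R :=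
  \sum_(i | `[< vsat (pJ P i) a >]) pP P i.

Definition prob_kb (K : kb R V Val NC NR) (a : caxiom V Val NC NR) : R :=
  if `[< consistent K >] then
    inf [set p : R | exists P : pinterp, is_model P K /\ p = prob_in P a]
  else 1.
End Sem.

From HB Require Import structures.
From mathcomp Require Import all_boot all_order all_algebra.
From mathcomp Require Import boolp classical_sets reals.
Local Open Scope ring_scope.
Import Order.TTheory GRing.Theory Num.Theory.
Local Open Scope classical_set_scope.

(* Since every V-interpretation of a model P has positive probability,
   P_P(α) = 1 if all of them satisfy α and P_P(α) < 1 otherwise.  Hence
   K ⊨ α makes every candidate value 1, while a model violating α somewhere
   bounds the infimum P_K(α) strictly below 1 (the values are bounded below
   by 0, so the infimum is a lower bound). *)

Lemma psumr_lt_sum (R : numDomainType) (I : finType) (F : I -> R) (P : pred I) (i : I) :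
  (forall j, 0 < F j) -> ~~ P i -> \sum_(j | P j) F j < \sum_j F j.
Proof.
move=> F_gt0 Pi; rewrite [X in _ < X](bigID P) /= ltrDl (bigD1 i) //=.
by apply: ltr_wpDr; [apply: sumr_ge0 => j _; apply: ltW | apply: F_gt0].
Qed.

Section ProbKB.
Context {R : realType} {V : finType} {Val : V -> finType} {NC NR : Type}.
Implicit Types (P : @pinterp R V Val NC NR) (K : kb R V Val NC NR)
  (a : caxiom V Val NC NR).

Lemma prob_in_ge0 P a : 0 <= prob_in P a.
Proof. by apply: sumr_ge0 => i _; apply: ltW (pP_pos P i). Qed.

Lemma prob_in_psat P a : psat P a -> prob_in P a = 1.
Proof.
by move=> Pa; rewrite /prob_in -(pP_sum1 P); apply: eq_bigl => i; apply/asboolP.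
Qed.

Lemma prob_in_lt1 P a i : ~ vsat (pJ P i) a -> prob_in P a < 1.
Proof.
move=> Nai; rewrite -(pP_sum1 P).
by apply: (psumr_lt_sum _ _ _ _ i (pP_pos P)); apply/asboolPn.
Qed.

Lemma prob_kb_le_prob_in K a P : is_model P K -> prob_kb K a <= prob_in P a.
Proof.
move=> PK; rewrite /prob_kb ifT; last by apply/asboolP; exists P.
apply: ge_inf; last by exists P.
by exists 0 => _ [Q [_ ->]]; apply: prob_in_ge0.
Qed.

Lemma prob_kb_entailed K a : entails K a -> prob_kb K a = 1.
Proof.
move=> Ka; rewrite /prob_kb; case: ifPn => // /asboolP [P0 P0K].
suff -> : [set p | exists P, is_model P K /\ p = prob_in P a] = [set 1].
  exact: inf1.
apply/seteqP; split=> p /=.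
- by move=> [P [PK ->]]; apply: prob_in_psat; apply: Ka.
- by move=> ->; exists P0; rewrite prob_in_psat //; apply: Ka.
Qed.

End ProbKB.

Theorem mainTheorem6 (R : realType) (V : finType) (Val : V -> finType)
  (NC NR : Type) (K : kb R V Val NC NR) (C D : concept NC NR) (k : context V Val) :
  entails K (CAxiom C D k) <-> prob_kb K (CAxiom C D k) = 1.
Proof.
split; first exact: prob_kb_entailed.
move=> K1 P PK i; apply: contrapT => Ni.
have := le_lt_trans (prob_kb_le_prob_in K _ P PK) (prob_in_lt1 P _ i Ni).
by rewrite K1 ltxx.
Qed.
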